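(* Let $r\ge3$, $n>r$. In $T$ define $\zeta(T_{\rho^{-1}})=(F_nF_{n-1}\cdots F_{r+1})(F_1F_2\cdots F_r)1_\omega$ and $\zeta(T_\rho)=(E_rE_{r+1}\cdots E_{n-1})(E_{r-1}E_{r-2}\cdots E_1)E_n1_\omega$. Then $\zeta(T_{\rho^{-1}})\zeta(T_\rho)=1_\omega$ and $\zeta(T_\rho)\zeta(T_{\rho^{-1}})=1_\omega$.
   Context: $T$ is the $\mathbb{Q}(v)$-algebra with generators $E_i,F_i,K_i^{\pm1}$ ($1\le i\le n$, indices mod $n$) and relations: $K_iK_j=K_jK_i$; $K_iK_i^{-1}=K_i^{-1}K_i=1$; $K_iE_j=v^{\epsilon^+(i,j)}E_jK_i$; $K_iF_j=v^{-\epsilon^+(i,j)}F_jK_i$ ($\epsilon^+(i,j)=1$ if $j=i$, $-1$ if $j\equiv i-1\pmod n$, $0$ otherwise); $E_iF_j-F_jE_i=\delta_{ij}\frac{K_iK_{i+1}^{-1}-K_i^{-1}K_{i+1}}{v-v^{-1}}$; $E_iE_j=E_jE_i$, $F_iF_j=F_jF_i$ if $i-j\not\equiv\pm1$; $E_i^2E_j-(v+v^{-1})E_iE_jE_i+E_jE_i^2=0$, $F_i^2F_j-(v+v^{-1})F_iF_jF_i+F_jF_i^2=0$ if $i-j\equiv\pm1\pmod n$; $K_1\cdots K_n=v^r$; $\prod_{j=0}^r(K_i-v^j)=0$. For a composition $\lambda$ of $r$ into $n$ nonnegative parts, $1_\lambda=\prod_{i=1}^n\prod_{s=1}^{\lambda_i}\frac{K_iv^{-s+1}-K_i^{-1}v^{s-1}}{v^s-v^{-s}}$;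 $\omega=(1,\dots,1,0,\dots,0)$ with $r$ ones and $n-r$ zeros. *)

From HB Require Import structures.
From mathcomp Require Import all_boot all_order all_algebra.
Set Implicit Arguments. Unset Strict Implicit. Unset Printing Implicit Defensive.
Import Order.TTheory GRing.Theory Num.Theory.
Local Open Scope ring_scope.

Definition Qv : fieldType := {fraction {poly rat}}.
Definition v : Qv := tofrac 'X.

(* Indices are 1..n, taken mod n. *)
Definition nxt (n i : nat) : nat := if i == n then 1%N else i.+1.
Definition adj (n i j : nat) : bool :=
  (i %% n == j.+1 %% n)%N || (j %% n == i.+1 %% n)%N.
Definition epsp (n i j : nat) : int :=
  if i == j then 1 else if (j.+1 %% n == i %% n)%N then -1 else 0.

(* T is the algebra presented by these
   generators and relations; an identity holds in T iff it holds for every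
   family of elements satisfying the relations in every Q(v)-algebra. *)
Record Trels (n r : nat) (A : algType Qv) (E F K Ki : nat -> A) : Prop := {
  rK_comm : forall i j, (1 <= i <= n)%N -> (1 <= j <= n)%N -> K i * K j = K j * K i;
  rK_inv1 : forall i, (1 <= i <= n)%N -> K i * Ki i = 1;
  rK_inv2 : forall i, (1 <= i <= n)%N -> Ki i * K i = 1;
  rKE : forall i j, (1 <= i <= n)%N -> (1 <= j <= n)%N ->
      K i * E j = (v ^ epsp n i j) *: (E j * K i);
  rKF : forall i j, (1 <= i <= n)%N -> (1 <= j <= n)%N ->
      K i * F j = (v ^ (- epsp n i j)) *: (F j * K i);
  rEF : forall i j, (1 <= i <= n)%N -> (1 <= j <= n)%N ->
      E i * F j - F j * E i =
      (if i == j then (v - v^-1)^-1 *: (K i * Ki (nxt n i) - Ki i * K (nxt n i))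
       else 0);
  rEE : forall i j, (1 <= i <= n)%N -> (1 <= j <= n)%N -> ~~ adj n i j ->
      E i * E j = E j * E i;
  rFF : forall i j, (1 <= i <= n)%N -> (1 <= j <= n)%N -> ~~ adj n i j ->
      F i * F j = F j * F i;
  rEserre : forall i j, (1 <= i <= n)%N -> (1 <= j <= n)%N -> adj n i j ->
      E i * E i * E j - (v + v^-1) *: (E i * E j * E i) + E j * E i * E i = 0;
  rFserre : forall i j, (1 <= i <= n)%N -> (1 <= j <= n)%N -> adj n i j ->
      F i * F i * F j - (v + v^-1) *: (F i * F j * F i) + F j * F i * F i = 0;
  rKprod : \prod_(1 <= i < n.+1) K i = (v ^+ r)%:A;
  rKpoly : forall i, (1 <= i <= n)%N ->
      \prod_(0 <= j < r.+1) (K i - (v ^+ j)%:A) = 0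
}.

(* 1_lambda for a composition lambda (given as a function on 1..n) *)
Definition oneL (n : nat) (A : algType Qv) (K Ki : nat -> A) (lam : nat -> nat) : A :=
  \prod_(1 <= i < n.+1) \prod_(1 <= s < (lam i).+1)
     ((v ^+ s - v ^- s)^-1 *:
        (v ^ (1 - (s%:Z)) *: K i - v ^ ((s%:Z) - 1) *: Ki i)).

Definition omega (r : nat) (i : nat) : nat := if (i <= r)%N then 1%N else 0%N.

Definition zeta_rhoinv (n r : nat) (A : algType Qv) (F K Ki : nat -> A) : A :=
  (\prod_(0 <= k < n - r) F (n - k)%N) * (\prod_(1 <= i < r.+1) F i)
  * oneL n K Ki (omega r).

Definition zeta_rho (n r : nat) (A : algType Qv) (E K Ki : nat -> A) : A :=
  (\prod_(r <= i < n) E i) * (\prod_(0 <= k < r.-1) E (r.-1 - k)%N) * E n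
  * oneL n K Ki (omega r).

From HB Require Import structures.
From mathcomp Require Import all_boot all_order all_algebra.
From mathcomp Require Import zify.
Import GRing.Theory.
Set Implicit Arguments. Unset Strict Implicit. Unset Printing Implicit Defensive.
Local Open Scope ring_scope.

(* Everything happens on weight vectors.  First, 1_omega is itself a weight
   vector of weight omega: on it every K_i acts diagonalisably with eigenvalues
   v^a, 0 <= a <= r, and a >= 1 for i <= r because 1_omega contains the factor
   K_i - K_i^-1; as K_1 ... K_n = v^r, the exponents must be exactly omega.
   On a vector whose weight is a 0/1 composition, E_j and F_j move a unit
   between positions j+1 and j.  If F_j (resp. E_j) kills y for weight reasons,
   i.e. it would produce the K-eigenvalue v^-1, which the relation
   prod_a (K_i - v^a) = 0 forbids, then the commutator relation gives
   F_j E_j y = y (resp. E_j F_j y = y).  Both products then telescope factor by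
   factor, each 1_omega acting as the identity on the vectors of weight omega
   it meets. *)

(** * Bicommutants *)

Section Bicommutant.
Variables (R : comNzRingType) (A : algType R) (G : A -> Prop).
Hypothesis G_comm : forall g h, G g -> G h -> GRing.comm g h.

(* Polynomials in commuting invertible generators and their inverses lie in the
   bicommutant of the generators, a commutative subalgebra; this is how we
   commute spectral projections past each other without describing the
   subalgebra they generate. *)
Definition centralizes (z : A) := forall g, G g -> GRing.comm z g.
Definition bicomm (x : A) := forall z, centralizes z -> GRing.comm z x.

Lemma bicomm_gen g : G g -> bicomm g.
Proof. by move=> Gg z; apply. Qed.

Lemma bicommC x y : bicomm x -> bicomm y -> GRing.comm x y.
Proof.
move=> bx by_; apply/commr_sym/bx => g Gg.
by apply/commr_sym/by_ => h Gh; apply: G_comm.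
Qed.

Lemma bicomm1 : bicomm 1.
Proof. by move=> z _; apply: commr1. Qed.

Lemma bicommD x y : bicomm x -> bicomm y -> bicomm (x + y).
Proof. by move=> bx by_ z Cz; apply: commrD; [apply: bx | apply: by_]. Qed.

Lemma bicommN x : bicomm x -> bicomm (- x).
Proof. by move=> bx z Cz; apply/commrN/bx. Qed.

Lemma bicommB x y : bicomm x -> bicomm y -> bicomm (x - y).
Proof. by move=> bx by_; apply/bicommD/bicommN. Qed.

Lemma bicommM x y : bicomm x -> bicomm y -> bicomm (x * y).
Proof. by move=> bx by_ z Cz; apply: commrM; [apply: bx | apply: by_]. Qed.

Lemma bicommZ k x : bicomm x -> bicomm (k *: x).
Proof. by move=> bx z Cz; rewrite /GRing.comm -scalerAr -scalerAl bx. Qed.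

Lemma bicomm_alg k : bicomm k%:A.
Proof. exact/bicommZ/bicomm1. Qed.

Lemma bicommV x y : bicomm x -> x * y = 1 -> y * x = 1 -> bicomm y.
Proof.
move=> bx xy1 yx1 z Cz.
by rewrite /GRing.comm -[z * y]mul1r -yx1 -mulrA (mulrA x) -(bx z Cz) -!mulrA xy1 mulr1.
Qed.

Lemma bicommB_alg x k : bicomm x -> bicomm (x - k%:A).
Proof. by move=> bx; apply/bicommB/bicomm_alg. Qed.

Lemma bicomm_prod (I : eqType) (s : seq I) (f : I -> A) :
  (forall i, i \in s -> bicomm (f i)) -> bicomm (\prod_(i <- s) f i).
Proof.
by move=> bf; rewrite big_seq; apply: big_ind => //; [apply: bicomm1 | apply: bicommM].
Qed.

Lemma bicomm_sum (I : Type) (s : seq I) (f : I -> A) :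
  (forall i, bicomm (f i)) -> bicomm (\sum_(i <- s) f i).
Proof.
move=> bf; apply: big_ind => //; last exact: bicommD.
by move=> z _; apply: commr0.
Qed.

Lemma bicomm_prod_rem (I : eqType) (s : seq I) (f : I -> A) (a : I) :
  (forall i, i \in s -> bicomm (f i)) -> a \in s ->
  \prod_(i <- s) f i = f a * \prod_(i <- rem a s) f i.
Proof.
elim: s => [|b s IH] //= bf sa; rewrite big_cons; case: eqP => [-> //| ab].
have {}sa : a \in s by case/predU1P: sa => // /esym.
have bf' i : i \in s -> bicomm (f i) by move=> si; apply: bf; rewrite inE si orbT.
by rewrite big_cons IH // !mulrA (bicommC (bf b (mem_head _ _)) (bf' a sa)).
Qed.

End Bicommutant.

Lemma commr_prod_prod (R : pzSemiRingType) (I J : eqType) (s : seq I) (t : seq J)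
    (f : I -> R) (g : J -> R) :
  (forall i j, i \in s -> j \in t -> GRing.comm (f i) (g j)) ->
  GRing.comm (\prod_(i <- s) f i) (\prod_(j <- t) g j).
Proof.
move=> fg; rewrite big_seq; apply/commr_sym.
apply: big_ind => [|x y|i si]; [exact: commr1 | exact: commrM|].
rewrite big_seq; apply/commr_sym.
by apply: big_ind => [|x y|j tj]; [exact: commr1 | exact: commrM | apply: fg].
Qed.

Lemma prod_sub_eigen (R : comNzRingType) (A : algType R) (X y : A) (c : R)
    (I : Type) (s : seq I) (f : I -> R) :
  X * y = c *: y ->
  (\prod_(i <- s) (X - (f i)%:A)) * y = (\prod_(i <- s) (c - f i)) *: y.
Proof.
move=> Xy; elim: s => [|i s IH]; first by rewrite !big_nil mul1r scale1r.
rewrite !big_cons -mulrA IH -scalerAr mulrBl Xy mulr_algl -scalerBl scalerA.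
by rewrite mulrC.
Qed.

(** * Spectra of commuting operators *)

Section Spectrum.
Variables (F : fieldType) (A : algType F) (G : A -> Prop) (q : F).
Hypothesis G_comm : forall g h, G g -> G h -> GRing.comm g h.
Hypothesis expq_inj : forall a b : nat, q ^+ a = q ^+ b -> a = b.

Local Notation bicomm := (bicomm G).

Lemma expq_neq0 a : q ^+ a != 0.
Proof.
rewrite expf_neq0 //; apply/eqP => q0.
by have := @expq_inj 1 2; rewrite q0 expr1 expr2 mul0r => /(_ erefl).
Qed.

(* For uniq s, spec_in X y s makes y a sum of X-eigenvectors with eigenvalues
   among the q ^+ a, a \in s (eigen_decomposition). *)
Definition spec_in (X y : A) (s : seq nat) := (\prod_(a <- s) (X - (q ^+ a)%:A)) * y = 0.

Definition spec_ge (X y : A) (m : nat) :=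
  exists s, [/\ uniq s, spec_in X y s & all (leq m) s].

Lemma spec_in_eigen X y s a : X * y = q ^+ a *: y -> a \in s -> spec_in X y s.
Proof.
move=> Xy sa; rewrite /spec_in (prod_sub_eigen _ _ Xy); apply/eqP.
rewrite scaler_eq0 prodf_seq_eq0; apply/orP; left.
by apply/hasP; exists a => //; rewrite subrr eqxx.
Qed.

Lemma spec_in_eq0 X y s c :
  spec_in X y s -> X * y = c *: y -> (forall a, a \in s -> c != q ^+ a) -> y = 0.
Proof.
rewrite /spec_in => + Xy cs; rewrite (prod_sub_eigen _ _ Xy) => /eqP.
rewrite scaler_eq0 prodf_seq_eq0 => /orP [/hasP [a sa /andP [_]]|/eqP //].
by rewrite subr_eq0 (negbTE (cs a sa)).
Qed.

Lemma spec_in_bicomm X Q y s :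
  bicomm X -> bicomm Q -> spec_in X y s -> spec_in X (Q * y) s.
Proof.
move=> bX bQ; rewrite /spec_in mulrA.
rewrite -(bicommC G_comm bQ (bicomm_prod (fun _ _ => bicommB_alg _ bX))).
by rewrite -mulrA => ->; rewrite mulr0.
Qed.

Lemma eigen_decomposition X s y : bicomm X -> uniq s -> spec_in X y s ->
  exists Q : nat -> A, [/\ \sum_(a <- s) Q a * y = y,
    forall a, a \in s -> X * (Q a * y) = q ^+ a *: (Q a * y) &
    forall a, bicomm (Q a)].
Proof.
move=> bX; elim: s y => [|a s IH] y /=.
  rewrite /spec_in big_nil mul1r => _ ->; exists (fun=> 1).
  by split=> [|//|_]; [rewrite big_nil | apply: bicomm1].
case/andP=> sa us ys; set Xa := X - (q ^+ a)%:A.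
have bXa : bicomm Xa by apply: bicommB_alg.
have [|Q' [sumQ' eigQ' bQ']] := IH (Xa * y) us.
  rewrite /spec_in mulrA (bicommC G_comm (bicomm_prod (fun _ _ => bicommB_alg _ bX)) bXa).
  by move: ys; rewrite /spec_in big_cons.
have qba b : b \in s -> q ^+ b - q ^+ a != 0.
  by move=> sb; rewrite subr_eq0; apply: contraNneq sa => /expq_inj <-.
pose P b := (q ^+ b - q ^+ a)^-1 *: (Q' b * Xa).
have Py b : P b * y = (q ^+ b - q ^+ a)^-1 *: (Q' b * (Xa * y)).
  by rewrite -scalerAl -mulrA.
have XaPy b : b \in s -> Xa * (P b * y) = Q' b * (Xa * y).
  move=> sb; rewrite Py -scalerAr mulrBl eigQ' // mulr_algl -scalerBl scalerA.
  by rewrite mulVf ?scale1r ?qba.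
exists (fun b => if b == a then 1 - \sum_(b' <- s) P b' else P b); split.
- rewrite big_cons eqxx mulrBl mul1r mulr_suml -[RHS](subrK (\sum_(b <- s) P b * y)).
  congr (_ + _); apply: eq_big_seq => b sb.
  by rewrite ifN //; apply: contraNneq sa => <-.
- move=> b; rewrite inE => /predU1P [->|sb]; last first.
    rewrite ifN; last by apply: contraNneq sa => <-.
    by rewrite Py -!scalerAr eigQ' // !scalerA mulrC.
  rewrite eqxx; apply/eqP; rewrite -subr_eq0 -mulr_algl -mulrBl -/Xa.
  rewrite [(1 - _) * y]mulrBl mul1r mulr_suml mulrBr mulr_sumr.
  by rewrite (eq_big_seq (fun b => Q' b * (Xa * y))) ?sumQ' ?subrr // => b /XaPy.
- move=> b; case: eqP => _; last by apply/bicommZ/bicommM.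
  by apply/bicommB/bicomm_sum => [|b']; [apply: bicomm1 | apply/bicommZ/bicommM].
Qed.

Lemma spec_ge_mul X Y y m1 m2 : bicomm X -> bicomm Y ->
  spec_ge X y m1 -> spec_ge Y y m2 -> spec_ge (X * Y) y (m1 + m2).
Proof.
move=> bX bY [s [us Xs ms]] [t [ut Yt mt]].
exists (undup [seq (a + b)%N | a <- s, b <- t]); split; first exact: undup_uniq.
  have [Q [sumQ eigQ bQ]] := eigen_decomposition bX us Xs.
  rewrite /spec_in -sumQ mulr_sumr big1_seq // => a /andP [_ sa].
  have [Q' [sumQ' eigQ' bQ']] := eigen_decomposition bY ut (spec_in_bicomm bY (bQ a) Yt).
  rewrite -sumQ' mulr_sumr big1_seq // => b /andP [_ tb].
  apply: (@spec_in_eigen _ _ _ (a + b)); last first.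
    by rewrite mem_undup; apply/allpairsP; exists (a, b).
  rewrite -mulrA eigQ' // -scalerAr mulrA (bicommC G_comm bX (bQ' b)) -mulrA eigQ //.
  by rewrite -scalerAr scalerA -exprD addnC.
apply/allP => c; rewrite mem_undup => /allpairsP [[a b] [sa tb ->]] /=.
by rewrite leq_add //; [apply: (allP ms) | apply: (allP mt)].
Qed.

Lemma spec_ge_prod (I : eqType) (s : seq I) (f : I -> A) (m : I -> nat) y :
  (forall i, i \in s -> bicomm (f i) /\ spec_ge (f i) y (m i)) ->
  spec_ge (\prod_(i <- s) f i) y (\sum_(i <- s) m i).
Proof.
elim: s => [|i s IH] fs.
  exists [:: 0%N]; rewrite !big_nil; split=> //.
  by rewrite /spec_in big_seq1 expr0 scale1r subrr mul0r.
have fs' j : j \in s -> bicomm (f j) /\ spec_ge (f j) y (m j).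
  by move=> sj; apply: fs; rewrite inE sj orbT.
have [bfi fi] := fs i (mem_head _ _).
rewrite !big_cons; apply: spec_ge_mul bfi _ fi (IH fs').
by apply: bicomm_prod => j /fs' [].
Qed.

Lemma eigen_factor_min X R y m a l : bicomm X -> bicomm R ->
  spec_ge R y m -> spec_in X y (iota a l) -> X * (R * y) = q ^+ (m + a) *: y ->
  X * y = q ^+ a *: y.
Proof.
move=> bX bR [s [us Rs ms]] Xs XRy.
have [Q [sumQ eigQ bQ]] := eigen_decomposition bR us Rs.
rewrite -sumQ mulr_sumr scaler_sumr; apply: eq_big_seq => c sc.
have XRw : q ^+ c *: (X * (Q c * y)) = q ^+ (m + a) *: (Q c * y).
  rewrite scalerAr -eigQ // [R * _]mulrA (bicommC G_comm bR (bQ c)) -mulrA.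
  by rewrite [X * _]mulrA (bicommC G_comm bX (bQ c)) -mulrA XRy -scalerAr.
case: (ltngtP m c) => [mc|cm|mc]; last 2 first.
- by have := allP ms c sc; rewrite leqNgt cm.
- by subst m; apply: (scalerI (expq_neq0 c)); rewrite XRw scalerA -exprD.
have Xw : X * (Q c * y) = (q ^+ (m + a) / q ^+ c) *: (Q c * y).
  by apply: (scalerI (expq_neq0 c)); rewrite XRw scalerA mulrC divfK ?expq_neq0.
suff -> : Q c * y = 0 by rewrite mulr0 scaler0.
apply: (spec_in_eq0 (spec_in_bicomm bX (bQ c) Xs) Xw) => j; rewrite mem_iota.
move=> /andP [aj _]; apply/eqP => /(congr1 (fun t => t * q ^+ c)).
by rewrite divfK ?expq_neq0 // -exprD => /expq_inj; lia.
Qed.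

End Spectrum.

Lemma expv_inj (a b : nat) : v ^+ a = v ^+ b -> a = b.
Proof.
rewrite /v -!rmorphXn /= => /eqP; rewrite tofrac_eq => /eqP ab.
by have := congr1 (fun p : {poly rat} => size p) ab; rewrite /= !size_polyXn => -[].
Qed.

Lemma v_neq0 : v != 0.
Proof. by have := expq_neq0 expv_inj 1; rewrite expr1. Qed.

Lemma v_subV_neq0 : v - v^-1 != 0.
Proof.
rewrite subr_eq0; apply/eqP => vV.
by have := @expv_inj 2 0; rewrite expr2 {2}vV mulfV ?v_neq0 // expr0 => /(_ erefl).
Qed.

Lemma sum_omega n r : (r <= n)%N -> (\sum_(1 <= i < n.+1) omega r i = r)%N.
Proof.
move=> rn; rewrite (big_cat_nat _ (n := r.+1)) //=.
rewrite (@eq_big_nat _ _ _ 1 r.+1 _ (fun=> 1%N)) => [|i]; last first.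
  by rewrite /omega; case: ifP; lia.
rewrite (@eq_big_nat _ _ _ r.+1 n.+1 _ (fun=> 0%N)) => [|i]; last first.
  by rewrite /omega; case: ifP; lia.
by rewrite !sum_nat_const_nat muln1 muln0 addn0 subn1.
Qed.

(** * The weight of 1_omega *)

Section WeightVectors.
Variables (n r : nat) (A : algType Qv) (E F K Ki : nat -> A).
Hypothesis hT : Trels n r E F K Ki.
Hypothesis r_gt0 : (0 < r)%N.
Hypothesis r_lt_n : (r < n)%N.

Definition Kgen (x : A) := exists2 i, (1 <= i <= n)%N & x = K i.

Local Notation bicomm := (bicomm Kgen).
Local Notation one_omega := (oneL n K Ki (omega r)).

(* Only 0/1 weights occur; such a weight is given by its support S. *)
Definition has_weight (S : nat -> bool) (y : A) :=
  forall i, (1 <= i <= n)%N -> K i * y = v ^+ S i *: y.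

Lemma Kgen_comm g h : Kgen g -> Kgen h -> GRing.comm g h.
Proof. by move=> [i Hi ->] [j Hj ->]; apply: (rK_comm hT). Qed.

Lemma bicommK i : (1 <= i <= n)%N -> bicomm (K i).
Proof. by move=> Hi; apply: bicomm_gen; exists i. Qed.

Lemma bicommKi i : (1 <= i <= n)%N -> bicomm (Ki i).
Proof.
by move=> Hi; apply: (bicommV (bicommK Hi)); [exact: (rK_inv1 hT Hi) | exact: (rK_inv2 hT Hi)].
Qed.

Lemma Ki_eigen i y c :
  (1 <= i <= n)%N -> c != 0 -> K i * y = c *: y -> Ki i * y = c^-1 *: y.
Proof.
move=> Hi c0 Ky; rewrite -[in LHS](scale1r y) -(mulVf c0) -scalerA -Ky.
by rewrite scalerAr mulrA (rK_inv2 hT Hi) mul1r.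
Qed.

Lemma K_spec i y : (1 <= i <= n)%N -> spec_in v (K i) y (iota 0 r.+1).
Proof.
by move=> Hi; have := rKpoly hT Hi; rewrite /index_iota subn0 /spec_in => ->; rewrite mul0r.
Qed.

Lemma K_eigen_vV_eq0 i y : (1 <= i <= n)%N -> K i * y = v^-1 *: y -> y = 0.
Proof.
move=> Hi Ky; apply: (spec_in_eq0 (K_spec y Hi) Ky) => a _.
apply/eqP => vVa.
by have := @expv_inj 0 a.+1; rewrite exprS -vVa mulfV ?v_neq0 // expr0 => /(_ erefl).
Qed.

Lemma oneL_omegaE : one_omega =
  \prod_(1 <= i < n.+1) (if (i <= r)%N then (v - v^-1)^-1 *: (K i - Ki i) else 1).
Proof.
apply: eq_bigr => i _; rewrite /omega; case: leqP => _; last by rewrite big_geq.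
by rewrite big_nat1 expr1 subrr expr0z !scale1r.
Qed.

Lemma one_omega_fix y : has_weight (fun i => (i <= r)%N) y -> one_omega * y = y.
Proof.
move=> wy; rewrite oneL_omegaE big_seq.
apply: (big_ind (fun x => x * y = y)) => [|x z xy zy|i]; first exact: mul1r.
  by rewrite -mulrA zy.
rewrite mem_index_iota => Hi; case: leqP => ir; last exact: mul1r.
have Ky : K i * y = v *: y by rewrite wy ?ir ?expr1 //; lia.
rewrite -scalerAl mulrBl Ky (Ki_eigen _ v_neq0 Ky); last lia.
by rewrite -scalerBl scalerA mulVf ?v_subV_neq0 ?scale1r.
Qed.

(* For i <= r, the factor K_i - K_i^-1 = (K_i - 1)(K_i + 1)K_i^-1 of 1_omega
   removes the eigenvalue v^0. *)
Lemma K_spec_one_omega i : (1 <= i <= n)%N ->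
  spec_in v (K i) one_omega (iota (omega r i) (r.+1 - omega r i)).
Proof.
move=> Hi; rewrite /omega; case: leqP => ir; last by rewrite subn0; apply: K_spec.
have bfactor j : j \in index_iota 1 n.+1 ->
    bicomm (if (j <= r)%N then (v - v^-1)^-1 *: (K j - Ki j) else 1).
  rewrite mem_index_iota => Hj; case: ifP => _; last exact: bicomm1.
  by apply/bicommZ/bicommB; [apply: bicommK | apply: bicommKi]; lia.
have KiE : K i - Ki i = (K i - 1) * ((K i + 1) * Ki i).
  rewrite [(K i + 1) * _]mulrDl (rK_inv1 hT Hi) mul1r mulrBl !mulrDr mulr1.
  by rewrite (rK_inv1 hT Hi) !mul1r opprD addrA addrK.
have Kpoly : (K i - 1) * \prod_(a <- iota 1 r) (K i - (v ^+ a)%:A) = 0.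
  by have := rKpoly hT Hi; rewrite /index_iota subn0 /= big_cons expr0 scale1r.
have bprod : bicomm (\prod_(a <- iota 1 r) (K i - (v ^+ a)%:A)).
  by apply: bicomm_prod => a _; apply/bicommB_alg/bicommK.
have bK1 : bicomm (K i - 1) by apply/bicommB; [apply: bicommK | apply: bicomm1].
rewrite subSS subn0 /spec_in oneL_omegaE (bicomm_prod_rem Kgen_comm (a := i) bfactor).
  rewrite ir mulrA -scalerAr KiE [_ * ((K i - 1) * _)]mulrA.
  by rewrite -(bicommC Kgen_comm bK1 bprod) Kpoly !mul0r scaler0 mul0r.
by rewrite mem_index_iota; lia.
Qed.

(* K_i times the product R of the other K_j is v^r, and the exponents of R on
   1_omega are at least r - omega_i. *)
Lemma one_omega_weight : has_weight (fun i => (i <= r)%N) one_omega.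
Proof.
move=> i Hi.
have iI : i \in iota 1 n by rewrite mem_iota; lia.
have bK j : j \in iota 1 n -> bicomm (K j) by rewrite mem_iota => Hj; apply: bicommK; lia.
pose R := \prod_(j <- rem i (iota 1 n)) K j.
have KR : K i * R = (v ^+ r)%:A.
  by rewrite -(bicomm_prod_rem Kgen_comm bK iI) -(rKprod hT) /index_iota subSS subn0.
have Rspec : spec_ge v R one_omega (\sum_(j <- rem i (iota 1 n)) omega r j).
  apply: (spec_ge_prod Kgen_comm expv_inj) => j /mem_rem jI; split; first exact: bK.
  exists (iota (omega r j) (r.+1 - omega r j)); split; first exact: iota_uniq.
    by apply: K_spec_one_omega; move: jI; rewrite mem_iota; lia.
  by apply/allP => c; rewrite mem_iota => /andP [].
have sumR : (\sum_(j <- rem i (iota 1 n)) omega r j + omega r i = r)%N.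
  by have := sum_omega (ltnW r_lt_n); rewrite /index_iota subSS subn0 (big_rem _ iI) addnC.
apply: (eigen_factor_min Kgen_comm expv_inj (bicommK Hi) _ Rspec (K_spec_one_omega Hi)).
  by apply: bicomm_prod => j /mem_rem; apply: bK.
by rewrite mulrA KR mulr_algl sumR.
Qed.

(** * Raising and lowering 0/1 weights *)

Lemma nxt_range k : (1 <= k <= n)%N -> (1 <= nxt n k <= n)%N.
Proof. by rewrite /nxt; case: eqP; lia. Qed.

Lemma epsp_nxt i j : (1 <= i <= n)%N -> (1 <= j <= n)%N ->
  epsp n i j = if i == j then 1 else if i == nxt n j then -1 else 0.
Proof.
move=> Hi Hj; rewrite /epsp; case: eqP => // _.
have modi : (i %% n = if i == n then 0 else i)%N.
  by case: eqP => [->|ni]; [rewrite modnn | rewrite modn_small; lia].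
have modj : (j.+1 %% n = if j == n then 1 else if j.+1 == n then 0 else j.+1)%N.
  case: eqP => [->|nj]; first by rewrite -addn1 modnDl modn_small; lia.
  by case: eqP => [->|nj1]; [rewrite modnn | rewrite modn_small; lia].
suff -> : (j.+1 %% n == i %% n)%N = (i == nxt n j) by [].
by rewrite modi modj /nxt; repeat case: ifP; lia.
Qed.

Lemma K_E_eigen i j y c : (1 <= i <= n)%N -> (1 <= j <= n)%N ->
  K i * y = c *: y -> K i * (E j * y) = (v ^ epsp n i j * c) *: (E j * y).
Proof.
move=> Hi Hj Ky.
by rewrite mulrA (rKE hT Hi Hj) -scalerAl -mulrA Ky -scalerAr scalerA.
Qed.

Lemma K_F_eigen i j y c : (1 <= i <= n)%N -> (1 <= j <= n)%N ->
  K i * y = c *: y -> K i * (F j * y) = (v ^ (- epsp n i j) * c) *: (F j * y).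
Proof.
move=> Hi Hj Ky.
by rewrite mulrA (rKF hT Hi Hj) -scalerAl -mulrA Ky -scalerAr scalerA.
Qed.

Lemma has_weight_E S S' j y : has_weight S y -> (1 <= j <= n)%N ->
  S j = false -> S (nxt n j) = true ->
  (forall i, (1 <= i <= n)%N ->
     S' i = if i == j then true else if i == nxt n j then false else S i) ->
  has_weight S' (E j * y).
Proof.
move=> wy Hj Sj Snj S'E i Hi; rewrite (K_E_eigen Hi Hj (wy i Hi)) epsp_nxt // S'E //.
case: eqP => [->|_]; first by rewrite Sj /= expr1z mulr1.
case: eqP => [->|_]; first by rewrite Snj /= exprN1 expr1 mulVf ?v_neq0.
by rewrite expr0z mul1r.
Qed.

Lemma has_weight_F S S' j y : has_weight S y -> (1 <= j <= n)%N ->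
  S j = true -> S (nxt n j) = false ->
  (forall i, (1 <= i <= n)%N ->
     S' i = if i == j then false else if i == nxt n j then true else S i) ->
  has_weight S' (F j * y).
Proof.
move=> wy Hj Sj Snj S'E i Hi; rewrite (K_F_eigen Hi Hj (wy i Hi)) epsp_nxt // S'E //.
case: eqP => [->|_]; first by rewrite Sj /= exprN1 expr1 mulVf ?v_neq0.
case: eqP => [->|_]; first by rewrite Snj /= opprK expr1z mulr1.
by rewrite oppr0 expr0z mul1r.
Qed.

Lemma F_E_cancel S k y : has_weight S y -> (1 <= k <= n)%N ->
  S k = false -> S (nxt n k) = true -> F k * (E k * y) = y.
Proof.
move=> wy Hk Sk Snk; have Hnk := nxt_range Hk.
have Ky : K k * y = 1 *: y by rewrite wy // Sk.
have Kny : K (nxt n k) * y = v *: y by rewrite wy // Snk expr1.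
have Fy : F k * y = 0.
  apply: (K_eigen_vV_eq0 Hk); rewrite (K_F_eigen Hk Hk Ky) epsp_nxt // eqxx.
  by rewrite mulr1 exprN1.
have FE : F k * E k =
    E k * F k - (v - v^-1)^-1 *: (K k * Ki (nxt n k) - Ki k * K (nxt n k)).
  by have := rEF hT Hk Hk; rewrite eqxx => <-; rewrite opprB addrC subrK.
rewrite mulrA FE mulrBl -mulrA Fy mulr0 sub0r -scalerAl mulrBl -!mulrA.
rewrite (Ki_eigen Hnk v_neq0 Kny) Kny -!scalerAr Ky (Ki_eigen Hk (oner_neq0 _) Ky).
rewrite invr1 !scale1r -scalerBl scalerA -scaleNr -mulrN opprB.
by rewrite mulVf ?v_subV_neq0 ?scale1r.
Qed.

Lemma E_F_cancel S k y : has_weight S y -> (1 <= k <= n)%N ->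
  S k = true -> S (nxt n k) = false -> E k * (F k * y) = y.
Proof.
move=> wy Hk Sk Snk; have Hnk := nxt_range Hk.
have Ky : K k * y = v *: y by rewrite wy // Sk expr1.
have Kny : K (nxt n k) * y = 1 *: y by rewrite wy // Snk.
have nxt_neq : (nxt n k == k) = false.
  by rewrite /nxt; case: (k =P n) => [->|_]; apply/eqP; lia.
have Ey : E k * y = 0.
  apply: (K_eigen_vV_eq0 Hnk); rewrite (K_E_eigen Hnk Hk Kny) epsp_nxt // nxt_neq eqxx.
  by rewrite mulr1 exprN1.
have EF : E k * F k =
    F k * E k + (v - v^-1)^-1 *: (K k * Ki (nxt n k) - Ki k * K (nxt n k)).
  by have := rEF hT Hk Hk; rewrite eqxx => <-; rewrite addrC subrK.
rewrite mulrA EF mulrDl -mulrA Ey mulr0 add0r -scalerAl mulrBl -!mulrA.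
rewrite (Ki_eigen Hnk (oner_neq0 _) Kny) Kny -!scalerAr Ky (Ki_eigen Hk v_neq0 Ky).
by rewrite invr1 !scale1r -scalerBl scalerA mulVf ?v_subV_neq0 ?scale1r.
Qed.

Lemma E_F_comm i j : (1 <= i <= n)%N -> (1 <= j <= n)%N -> i != j ->
  E i * F j = F j * E i.
Proof.
move=> Hi Hj ij; apply/eqP; rewrite -subr_eq0.
by have := rEF hT Hi Hj; rewrite (negbTE ij) => ->.
Qed.

Lemma nxt_cases x : ((x == n) && (nxt n x == 1%N)) || ((x != n) && (nxt n x == x.+1)).
Proof. by rewrite /nxt; case: eqP; rewrite eqxx ?orbT. Qed.

Ltac index_arith :=
  rewrite /=; repeat match goal with |- context [nxt n ?x] =>
    let y := fresh "y" in have := nxt_cases x; move: (nxt n x) => y end;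
  move=> *; repeat case: ifP => ?; lia.

Lemma has_weight_ext S S' y :
  (forall i, (1 <= i <= n)%N -> S i = S' i) -> has_weight S y -> has_weight S' y.
Proof. by move=> SS' wy i Hi; rewrite -SS' // wy. Qed.

Lemma E_lower_chain k : (k <= r.-1)%N ->
  has_weight (fun i => (i <= k) || (k.+2 <= i <= r) || (i == n))%N
     ((\prod_(0 <= t < k) E (k - t)%N) * (E n * one_omega)) /\
  (\prod_(1 <= i < k.+1) F i) * ((\prod_(0 <= t < k) E (k - t)%N) * (E n * one_omega))
    = E n * one_omega.
Proof.
have Hn : (1 <= n <= n)%N by lia.
elim: k => [|k IH] Hk.
  rewrite !big_geq // !mul1r; split => //.
  by apply: (has_weight_E one_omega_weight Hn); index_arith.
have [IHw IHe] := IH (ltnW Hk).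
rewrite big_nat_recl // subn0.
rewrite (eq_bigr (fun t => E (k - t)%N)); last by move=> t _; rewrite subSS.
rewrite -mulrA.
have Hk1 : (1 <= k.+1 <= n)%N by lia.
split; first by apply: (has_weight_E IHw Hk1); index_arith.
by rewrite big_nat_recr // -mulrA (F_E_cancel IHw Hk1) //; index_arith.
Qed.

Lemma E_upper_chain x m : (m <= n - r - 1)%N ->
  has_weight (fun i => (i <= r.-1) || (i == n))%N x ->
  has_weight (fun i => (i <= r.-1) || (i == n - m))%N ((\prod_(n - m <= i < n) E i) * x).
Proof.
move=> + wx; elim: m => [|m IH] Hm; first by rewrite subn0 big_geq // mul1r.
rewrite big_ltn; last lia.
have -> : (n - m.+1).+1 = (n - m)%N by lia.
by rewrite -mulrA; apply: (has_weight_E (IH (ltnW Hm))); [lia | index_arith..].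
Qed.

Lemma E_wrap_chain m : (m <= n - r)%N ->
  has_weight (fun i => (2 <= i <= r) || (if m == 0 then i == 1 else i == (n - m).+1))%N
     ((\prod_((n - m).+1 <= i < n.+1) E i) * one_omega) /\
  (\prod_(0 <= k < m) F (n - k)%N) * ((\prod_((n - m).+1 <= i < n.+1) E i) * one_omega)
    = one_omega.
Proof.
elim: m => [|m IH] Hm.
  rewrite subn0 !big_geq // !mul1r; split => //.
  by apply: (has_weight_ext _ one_omega_weight); index_arith.
have [IHw IHe] := IH (ltnW Hm).
have -> : (n - m.+1).+1 = (n - m)%N by lia.
rewrite big_ltn; last lia.
have Hj : (1 <= n - m <= n)%N by lia.
rewrite -mulrA; split; first by apply: (has_weight_E IHw Hj); index_arith.
by rewrite big_nat_recr // -mulrA (F_E_cancel IHw Hj) //; index_arith.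
Qed.

Lemma zeta_rhoinv_zeta_rho : zeta_rhoinv n r F K Ki * zeta_rho n r E K Ki = one_omega.
Proof.
have Hr : (1 <= r <= n)%N by lia.
have [wx Fx] := E_lower_chain (leqnn r.-1); rewrite prednK // in Fx.
set x := _ * (E n * one_omega) in wx Fx.
have wy : has_weight (fun i => (i <= r.-1) || (i == r.+1))%N
    ((\prod_(r.+1 <= i < n) E i) * x).
  have <- : (n - (n - r - 1) = r.+1)%N by lia.
  by apply: E_upper_chain => //; apply: (has_weight_ext _ wx); index_arith.
set y := _ * x in wy.
have wEy : has_weight (fun i => i <= r)%N (E r * y).
  by apply: (has_weight_E wy Hr); index_arith.
rewrite /zeta_rhoinv /zeta_rho [\prod_(1 <= i < r.+1) F i]big_nat_recr //=.
rewrite [\prod_(r <= i < n) E i]big_ltn // -!mulrA (one_omega_fix wEy).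
rewrite (F_E_cancel wy Hr); [|index_arith..].
rewrite /y (mulrA (\prod_(1 <= i < r) F i)) (commr_prod_prod (f := F) (g := E)).
  2: by move=> a b; rewrite !mem_index_iota => Ha Hb; apply/esym/E_F_comm; lia.
rewrite -mulrA Fx; have [_] := E_wrap_chain (leqnn (n - r)).
by rewrite subKn ?(ltnW r_lt_n) // big_nat_recr // -mulrA.
Qed.

Lemma F_lower_chain k u : (k <= r.-1)%N ->
  has_weight (fun i => (i <= k) || (k.+2 <= i <= r.+1))%N u ->
  has_weight (fun i => 2 <= i <= r.+1)%N ((\prod_(1 <= i < k.+1) F i) * u) /\
  (\prod_(0 <= t < k) E (k - t)%N) * ((\prod_(1 <= i < k.+1) F i) * u) = u.
Proof.
elim: k u => [|k IH] u Hk wu.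
  rewrite !big_geq // !mul1r; split => //; apply: (has_weight_ext _ wu); index_arith.
have Hk1 : (1 <= k.+1 <= n)%N by lia.
have wFu : has_weight (fun i => (i <= k) || (k.+2 <= i <= r.+1))%N (F k.+1 * u).
  by apply: (has_weight_F wu Hk1); index_arith.
have [IHw IHe] := IH _ (ltnW Hk) wFu.
rewrite big_nat_recr // -mulrA; split => //.
rewrite big_nat_recl // subn0 (eq_bigr (fun t => E (k - t)%N)) => [|t _]; last by rewrite subSS.
by rewrite -mulrA IHe (E_F_cancel wu Hk1) //; index_arith.
Qed.

Lemma F_upper_chain u m : (m <= n - r - 1)%N ->
  has_weight (fun i => (2 <= i <= r) || (i == n - m))%N u ->
  has_weight (fun i => (2 <= i <= r) || (i == n))%N
    ((\prod_(1 <= k < m.+1) F (n - k)%N) * u).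
Proof.
elim: m u => [|m IH] u Hm wu.
  by rewrite big_geq // mul1r; apply: (has_weight_ext _ wu); index_arith.
have Hj : (1 <= n - m.+1 <= n)%N by lia.
have wFu : has_weight (fun i => (2 <= i <= r) || (i == n - m))%N (F (n - m.+1)%N * u).
  by apply: (has_weight_F wu Hj); index_arith.
by rewrite big_nat_recr // -mulrA; apply: IH => //; lia.
Qed.

Lemma F_upper_chain_cancel u m : (m <= n - r)%N ->
  has_weight (fun i => (1 <= i <= r.-1) || (i == n - m))%N u ->
  (\prod_(n - m <= i < n) E i) * ((\prod_(1 <= k < m.+1) F (n - k)%N) * u) = u.
Proof.
elim: m u => [|m IH] u Hm wu; first by rewrite subn0 !big_geq // !mul1r.
have Hj : (1 <= n - m.+1 <= n)%N by lia.
have wFu : has_weight (fun i => (1 <= i <= r.-1) || (i == n - m))%N (F (n - m.+1)%N * u).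
  by apply: (has_weight_F wu Hj); index_arith.
rewrite big_nat_recr // -mulrA big_ltn; last lia.
have -> : (n - m.+1).+1 = (n - m)%N by lia.
by rewrite -mulrA (IH _ (ltnW Hm) wFu) (E_F_cancel wu Hj) //; index_arith.
Qed.

Lemma zeta_rho_zeta_rhoinv : zeta_rho n r E K Ki * zeta_rhoinv n r F K Ki = one_omega.
Proof.
have Hr : (1 <= r <= n)%N by lia.
have Hn : (1 <= n <= n)%N by lia.
have wFr : has_weight (fun i => (i <= r.-1) || (r.-1.+2 <= i <= r.+1))%N (F r * one_omega).
  by apply: (has_weight_F one_omega_weight Hr); index_arith.
have [wx Ex] := F_lower_chain (leqnn r.-1) wFr; rewrite prednK // in wx Ex.
set x := _ * (F r * one_omega) in wx Ex.
have wy : has_weight (fun i => (2 <= i <= r) || (i == n))%N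
    ((\prod_(1 <= k < n - r) F (n - k)%N) * x).
  have <- : (n - r - 1).+1 = (n - r)%N by lia.
  by apply: F_upper_chain => //; apply: (has_weight_ext _ wx); index_arith.
set y := _ * x in wy.
have wFy : has_weight (fun i => i <= r)%N (F n * y).
  by apply: (has_weight_F wy Hn); index_arith.
rewrite /zeta_rhoinv /zeta_rho [\prod_(1 <= i < r.+1) F i]big_nat_recr //=.
rewrite [\prod_(0 <= k < n - r) F (n - k)%N]big_ltn ?subn0; last lia.
rewrite -!mulrA (one_omega_fix wFy) (E_F_cancel wy Hn); [|index_arith..].
rewrite /y (mulrA (\prod_(0 <= k < r.-1) E (r.-1 - k)%N)) commr_prod_prod.
  2: by move=> a b; rewrite !mem_index_iota => Ha Hb; apply: E_F_comm; lia.
have we : has_weight (fun i => (1 <= i <= r.-1) || (i == n - (n - r)))%N one_omega.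
  by apply: (has_weight_ext _ one_omega_weight); index_arith.
have cancel := F_upper_chain_cancel (leqnn (n - r)) we.
rewrite big_nat_recr ?subn_gt0 // !subKn ?(ltnW r_lt_n) // -mulrA in cancel.
by rewrite -mulrA Ex.
Qed.

End WeightVectors.

Theorem lemma2p3p5 (r n : nat) (hr : (3 <= r)%N) (hn : (r < n)%N)
  (A : algType Qv) (E F K Ki : nat -> A) (hT : Trels n r E F K Ki) :
  zeta_rhoinv n r F K Ki * zeta_rho n r E K Ki = oneL n K Ki (omega r) /\
  zeta_rho n r E K Ki * zeta_rhoinv n r F K Ki = oneL n K Ki (omega r).
Proof.
have r_gt0 : (0 < r)%N by apply: leq_trans hr.
split; [exact: zeta_rhoinv_zeta_rho hT r_gt0 hn | exact: zeta_rho_zeta_rhoinv hT r_gt0 hn].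
Qed.
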